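(* Let $\mathcal{A}$ be a deterministic learning algorithm and consider the passive unlearning mechanism $\bar{\mathcal{A}}(U,\mathcal{A}(R\cup U),T(R\cup U))=\mathcal{A}(R\cup U)+\nu$ with $\nu\sim\mathcal{N}(0,\sigma^2 I_d)$ drawn independently at each call, where $\sigma$ may depend on the available information $(U,R\cup U)$ or $(\emptyset,R)$. If $\sigma=\sigma(R)=\frac{\mathrm{RS}_{\mathcal{A}}(R)}{\varepsilon}\sqrt{2\log(1.25/\delta)}$, computed from the retained set $R$, then $(\mathcal{A},\bar{\mathcal{A}})$ satisfies $(\varepsilon,\delta)$-unlearning for every $\varepsilon,\delta\in(0,1)$.
   Context: Datasets are finite subsets of a domain $\mathcal{Z}$; $\mathcal{A}$ maps datasets to $\mathcal{W}\subseteq\mathbb{R}^d$ with Euclidean norm. $\mathrm{RS}_{\mathcal{A}}(R)=\max_{Z\subseteq\mathcal{Z},|Z|=1}\|\mathcal{A}(R\cup Z)-\mathcal{A}(R)\|$. Two random variables $X,Y$ are $(\varepsilon,\delta)$-indistinguishable if for all measurable $W$, $P(X\in W)\le e^\varepsilon P(Y\in W)+\delta$ and symmetrically. The pair $(\mathcal{A},\bar{\mathcal{A}})$ satisfies $(\varepsilon,\delta)$-unlearning if for every dataset $R$ of size $n$ and every forget set $U$ with $|U\cup R|\le n+1$, $\bar{\mathcal{A}}(U,\mathcal{A}(R\cup U),T(R\cup U))$ and $\bar{\mathcal{A}}(\emptyset,\mathcal{A}(R),T(R))$ are $(\varepsilon,\delta)$-indistinguishable; here $T(S)=S$ is full side information.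 *)

From HB Require Import structures.
From mathcomp Require Import all_boot all_order all_algebra finmap.
From mathcomp Require Import all_classical all_reals all_analysis.
Set Implicit Arguments. Unset Strict Implicit. Unset Printing Implicit Defensive.
Import Order.TTheory GRing.Theory Num.Theory.
Local Open Scope classical_set_scope.
Local Open Scope ring_scope.

(* Vectors of R^d are represented as d.-tuple R, which carries the product
   (= Borel) sigma-algebra of mathcomp-analysis. Datasets are finite sets
   {fset Z} over a domain Z : choiceType. *)

Section Defs.
Context {R : realType}.

Definition vadd d (v w : d.-tuple R) : d.-tuple R :=
  [tuple tnth v i + tnth w i | i < d].
Definition vsub d (v w : d.-tuple R) : d.-tuple R :=
  [tuple tnth v i - tnth w i | i < d].

Definition enorm d (v : d.-tuple R) : R :=
  Num.sqrt (\sum_(i < d) tnth v i ^+ 2).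

(* Replace-one/add-one sensitivity RS_A(R) = max_{z} ||A(R u {z}) - A(R)||,
   taken as the supremum of the (assumed bounded) set of values. *)
Definition RS {Z : choiceType} d (A : {fset Z} -> d.-tuple R) (S : {fset Z}) : R :=
  sup [set enorm (vsub (A (S `|` [fset z])%fset) (A S)) | z in [set: Z]].

Definition RS_bounded {Z : choiceType} d (A : {fset Z} -> d.-tuple R) : Prop :=
  forall S : {fset Z},
    has_ubound [set enorm (vsub (A (S `|` [fset z])%fset) (A S)) | z in [set: Z]].

(* Iterated integral of f : R^d -> \bar R against the product of d copies of
   the one-dimensional centred normal law of standard deviation s > 0,
   i.e. the integral of f against N(0, s^2 I_d). *)
Fixpoint gauss_int (s : R) (d : nat) : (d.-tuple R -> \bar R) -> \bar R :=
  match d return (d.-tuple R -> \bar R) -> \bar R with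
  | 0 => fun f => f [tuple]
  | d'.+1 => fun f =>
      (\int[normal_prob 0 s]_x gauss_int s (fun t : d'.-tuple R => f [tuple of x :: t]))%E
  end.

(* Law of  w + nu,  nu ~ N(0, s^2 I_d)  (point mass at w when s = 0). *)
Definition gauss_out d (w : d.-tuple R) (s : R) (W : set (d.-tuple R)) : \bar R :=
  if s == 0 then (\1_W w)%:E
  else gauss_int s (fun t : d.-tuple R => (\1_W (vadd w t))%:E).

Definition indist d (eps delta : R) (P Q : set (d.-tuple R) -> \bar R) : Prop :=
  forall W : set (d.-tuple R), measurable W ->
    (P W <= (expR eps)%:E * Q W + delta%:E)%E /\
    (Q W <= (expR eps)%:E * P W + delta%:E)%E.

(* (eps,delta)-unlearning for a deterministic algorithm A and an unlearning
   mechanism Abar; Abar U w T returns the law of its (random) output, on input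
   forget set U, model w and side information T (here T(S) = S). *)
Definition unlearning {Z : choiceType} d (n : nat) (A : {fset Z} -> d.-tuple R)
  (Abar : {fset Z} -> d.-tuple R -> {fset Z} -> set (d.-tuple R) -> \bar R)
  (eps delta : R) : Prop :=
  forall Rs U : {fset Z},
    #|` Rs| = n -> (#|` (U `|` Rs)%fset| <= n.+1)%N -> [disjoint Rs & U]%fset ->
    indist eps delta (Abar U (A (Rs `|` U)%fset) (Rs `|` U)%fset) (Abar fset0 (A Rs) Rs).

Definition sigmaR {Z : choiceType} d (A : {fset Z} -> d.-tuple R) (eps delta : R)
  (Rs : {fset Z}) : R :=
  RS A Rs / eps * Num.sqrt (2 * ln ((5 / 4) / delta)).

(* Passive Gaussian unlearning mechanism with sigma computed from the retained
   set (R u U) \ U = R. *)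
Definition passive_gauss {Z : choiceType} d (A : {fset Z} -> d.-tuple R)
  (eps delta : R) (U : {fset Z}) (w : d.-tuple R) (T : {fset Z}) :
  set (d.-tuple R) -> \bar R :=
  gauss_out w (sigmaR A eps delta (T `\` U)%fset).

End Defs.

From HB Require Import structures.
From mathcomp Require Import all_boot all_order all_algebra finmap.
From mathcomp Require Import all_classical all_reals all_analysis.
From mathcomp Require Import measurable_realfun ring lra.
Import Order.TTheory GRing.Theory Num.Theory.
Local Open Scope ring_scope.
Local Open Scope classical_set_scope.
Set Implicit Arguments. Unset Strict Implicit. Unset Printing Implicit Defensive.

(* Adding N(0, s^2 I) noise to w1 and to w2 gives two laws whose density ratio
   at the noise t is e^L(t), L being the Gaussian log-likelihood ratio
   (Cameron-Martin). For a tilt lam > 0 and a constant C with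
   1 - e^x <= C e^(-lam x), the pointwise bound 1 <= e^(eps + L) + C e^(-lam (eps + L))
   integrates over any event W to
     P(w1 + nu in W) <= e^eps P(w2 + nu in W) + C E[e^(-lam (eps + L))],
   and this exponential moment is again Gaussian, equal to
   e^(-lam eps + (lam + lam^2) |w2 - w1|^2 / (2 s^2)). When |w2 - w1| <= RS(R) and
   s = RS(R) / eps * sqrt(2 ln(1.25 / delta)), a suitable choice of (C, lam)
   brings the error term down to delta. Forgetting at most one point moves the
   model by at most RS(R), and both runs compute the noise level from the same
   retained set R. *)

Section tuples.
Context {R : realType}.

Lemma measurable_cons_section d (f : d.+1.-tuple R -> \bar R) (y : R) :
  measurable_fun [set: d.+1.-tuple R] f ->
  measurable_fun [set: d.-tuple R] (fun t => f [tuple of y :: t]).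
Proof. by move=> mf; apply: measurableT_comp mf _; exact: measurable_cons. Qed.

Lemma measurable_cons_uncurry d (f : d.+1.-tuple R -> \bar R) :
  measurable_fun [set: d.+1.-tuple R] f ->
  measurable_fun [set: R * d.-tuple R] (fun p => f [tuple of p.1 :: p.2]).
Proof. by move=> mf; apply: measurableT_comp mf _; exact: measurable_cons. Qed.

Lemma vadd_cons d (a : d.+1.-tuple R) (y : R) (t : d.-tuple R) :
  vadd a [tuple of y :: t] = [tuple of thead a + y :: vadd [tuple of behead a] t].
Proof.
rewrite [in LHS](tuple_eta a); apply: eq_from_tnth => i.
by case: (unliftP ord0 i) => [j ->|->]; rewrite !(tnthS, tnth0, tnth_mktuple).
Qed.

Lemma measurable_vadd d (a : d.-tuple R) : measurable_fun [set: d.-tuple R] (vadd a).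
Proof.
apply/measurable_fun_tnthP => i.
rewrite (_ : _ \o _ = fun t => tnth a i + tnth t i); last first.
  by apply/funext => t /=; rewrite tnth_mktuple.
by apply: measurable_funD => //; exact: measurable_tnth.
Qed.

Lemma enorm_ge0 d (a : d.-tuple R) : 0 <= enorm a.
Proof. exact: sqrtr_ge0. Qed.

Lemma enorm_sqr d (a : d.-tuple R) : enorm a ^+ 2 = \sum_(i < d) tnth a i ^+ 2.
Proof. by rewrite sqr_sqrtr// sumr_ge0// => i _; exact: sqr_ge0. Qed.

Lemma enorm_vsubC d (v w : d.-tuple R) : enorm (vsub v w) = enorm (vsub w v).
Proof. by congr Num.sqrt; apply: eq_bigr => i _; rewrite !tnth_mktuple -sqrrN opprB. Qed.

Lemma enorm_vsub_eq0 d (v w : d.-tuple R) : enorm (vsub v w) = 0 -> v = w.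
Proof.
move=> /(congr1 (fun x => x ^+ 2)); rewrite enorm_sqr expr0n /= => /eqP.
rewrite psumr_eq0 => [/allP vw|i _]; last exact: sqr_ge0.
apply: eq_from_tnth => i; have /implyP := vw i (mem_index_enum i).
by rewrite tnth_mktuple sqrf_eq0 subr_eq0 => /(_ isT)/eqP.
Qed.

End tuples.

Section normal_shift.
Context {R : realType}.
Local Notation mu := (@lebesgue_measure R).

Lemma measurable_addr (a : R) : measurable_fun [set: R] (fun x : R => x + a).
Proof. by apply: measurable_funD => //; exact: measurable_cst. Qed.

(* The Radon-Nikodym derivative of normal_prob has the same integrals as
   normal_pdf over measurable sets, hence agrees with it almost everywhere. *)
Lemma ge0_integral_normal_prob (s : R) (h : R -> \bar R) :
  measurable_fun [set: R] h -> (forall x, 0 <= h x)%E ->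
  (\int[normal_prob 0 s]_x h x = \int[mu]_x (h x * (normal_pdf 0 s x)%:E))%E.
Proof.
move=> mh h0.
have dom := normal_prob_dominates (0 : R) s.
have int_pdf := Radon_Nikodym_SigmaFinite.f_integrable dom.
have mpdf : measurable_fun [set: R] (EFin \o normal_pdf 0 s).
  by apply/measurable_EFinP; exact: measurable_normal_pdf.
rewrite -(Radon_Nikodym_SigmaFinite.change_of_variables dom) //.
apply: ae_eq_integral => //.
- by apply: emeasurable_funM => //; exact: (measurable_int mu).
- exact: emeasurable_funM.
- apply: ae_eqe_mul2l; apply: integral_ae_eq => // E _ mE.
  by rewrite -Radon_Nikodym_SigmaFinite.f_integral.
Qed.

(* The cast equips the codomain with the sigma-algebra of lebesgue_measure. *)
Lemma lebesgue_measure_shift (a : R) (A : set R) : measurable A ->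
  pushforward mu (fun x : R => x + a : measurableTypeR R) A = mu A.
Proof.
move=> mA; apply/esym/lebesgue_measure_unique => //=; first exact: measurable_addr.
move=> _ _ [[x1 x2] _ <-]; rewrite /pushforward.
have -> : (fun x : R => x + a) @^-1` `]x1, x2] = `](x1 - a), (x2 - a)]%classic.
  by apply/seteqP; split => x /=; rewrite !in_itv /= ltrBlDr lerBrDr.
rewrite !lebesgue_measure_itv /= !lte_fin ltrD2r.
by case: ifP => // _; rewrite -!EFinD; congr (EFin _); ring.
Qed.

Lemma ge0_integral_lebesgue_shift (a : R) (h : R -> \bar R) :
  measurable_fun [set: R] h -> (forall x, 0 <= h x)%E ->
  (\int[mu]_x h (x + a)%R = \int[mu]_x h x)%E.
Proof.
move=> mh h0; have ma := measurable_addr a.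
transitivity (\int[pushforward mu (fun x : R => (x + a)%R : measurableTypeR R)]_x h x)%E.
  by rewrite ge0_integral_pushforward.
by apply: eq_measure_integral => A mA _; exact: lebesgue_measure_shift.
Qed.

Lemma ge0_integral_normal_prob_shift (s a : R) (h : R -> \bar R) : s != 0 ->
  measurable_fun [set: R] h -> (forall x, 0 <= h x)%E ->
  (\int[normal_prob 0 s]_x h (x + a)%R =
   \int[normal_prob 0 s]_x (h x * (expR ((2 * a * x - a ^+ 2) / (s ^+ 2 *+ 2)))%:E))%E.
Proof.
move=> s0 mh h0.
have mpdf := @measurable_normal_pdf R 0 s.
have mrho : measurable_fun [set: R] (fun x => expR ((2 * a * x - a ^+ 2) / (s ^+ 2 *+ 2))).
  apply: measurableT_comp => //; apply: measurable_funM => //.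
  by apply: measurable_funB => //; apply: measurable_funM.
rewrite !ge0_integral_normal_prob //; first last.
- exact: measurableT_comp mh (measurable_addr a).
- by move=> x; rewrite mule_ge0// lee_fin expR_ge0.
- by apply: emeasurable_funM => //; exact/measurable_EFinP.
pose g y := (h y * (normal_pdf 0 s (y - a))%:E)%E.
transitivity (\int[mu]_x g (x + a)%R)%E.
  by apply: eq_integral => x _; rewrite /g addrK.
rewrite ge0_integral_lebesgue_shift; first last.
- by move=> x; rewrite mule_ge0// lee_fin normal_pdf_ge0.
- apply: emeasurable_funM => //; apply/measurable_EFinP.
  by apply: (measurableT_comp mpdf); apply: measurable_funB.
apply: eq_integral => x _; rewrite /g -muleA -EFinM; congr (_ * EFin _)%E.
rewrite /normal_pdf (negbTE s0) /normal_fun mulrCA -expRD !subr0.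
by congr (_ * expR _); ring.
Qed.

End normal_shift.

Section gauss_int.
Context {R : realType} (s : R).
Local Notation N := (normal_prob (0 : R) s).

Lemma gauss_int_ge0 d (f : d.-tuple R -> \bar R) :
  (forall t, 0 <= f t)%E -> (0 <= gauss_int s f)%E.
Proof.
elim: d f => [|d IH] f f0 /=; first exact: f0.
by apply: integral_ge0 => y _; apply: IH => t; exact: f0.
Qed.

Lemma measurable_gauss_int d dX (X : measurableType dX)
    (F : X -> d.-tuple R -> \bar R) :
  measurable_fun [set: X * d.-tuple R] (fun p => F p.1 p.2) ->
  (forall x t, 0 <= F x t)%E ->
  measurable_fun [set: X] (fun x => gauss_int s (F x)).
Proof.
elim: d dX X F => [|d IH] dX X F mF F0 /=.
  apply: (measurableT_comp (f := fun p : X * 0.-tuple R => F p.1 p.2)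
    (g := fun x => (x, [tuple])) mF).
  exact: measurable_fun_pair.
pose G (p : X * R) (t : d.-tuple R) := F p.1 [tuple of p.2 :: t].
have mG : measurable_fun [set: X * R] (fun p => gauss_int s (G p)).
  apply: IH => [|p t]; last exact: F0.
  apply: (measurableT_comp (f := fun p : X * d.+1.-tuple R => F p.1 p.2)
    (g := fun p : X * R * d.-tuple R => (p.1.1, [tuple of p.1.2 :: p.2])) mF).
  apply: measurable_fun_pair => /=.
    exact: measurableT_comp measurable_fst measurable_fst.
  apply: measurable_cons => //.
  exact: measurableT_comp measurable_snd measurable_fst.
exact: (measurable_fun_fubini_tonelli_F (m2 := N) _ mG
  (fun p => gauss_int_ge0 (fun t => F0 _ _))).
Qed.

Lemma measurable_gauss_int_cons d (f : d.+1.-tuple R -> \bar R) :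
  measurable_fun [set: d.+1.-tuple R] f -> (forall t, 0 <= f t)%E ->
  measurable_fun [set: R] (fun y => gauss_int s (fun t => f [tuple of y :: t])).
Proof.
move=> mf f0; apply: (measurable_gauss_int (F := fun y t => f [tuple of y :: t])) => //.
exact: measurable_cons_uncurry.
Qed.

Lemma ge0_gauss_intZl d (c : R) (f : d.-tuple R -> \bar R) : 0 <= c ->
  measurable_fun [set: d.-tuple R] f -> (forall t, 0 <= f t)%E ->
  gauss_int s (fun t => c%:E * f t)%E = (c%:E * gauss_int s f)%E.
Proof.
move=> c0; elim: d f => [|d IH] f mf f0 //=.
transitivity (\int[N]_y (c%:E * gauss_int s (fun t => f [tuple of y :: t])))%E.
  apply: eq_integral => y _.
  by rewrite (IH (fun t => f [tuple of y :: t]))//; exact: measurable_cons_section.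
rewrite ge0_integralZl//; first exact: measurable_gauss_int_cons.
by move=> y _; exact: gauss_int_ge0.
Qed.

Lemma ge0_gauss_intD d (f g : d.-tuple R -> \bar R) :
  measurable_fun [set: d.-tuple R] f -> (forall t, 0 <= f t)%E ->
  measurable_fun [set: d.-tuple R] g -> (forall t, 0 <= g t)%E ->
  gauss_int s (fun t => f t + g t)%E = (gauss_int s f + gauss_int s g)%E.
Proof.
elim: d f g => [|d IH] f g mf f0 mg g0 //=.
transitivity (\int[N]_y (gauss_int s (fun t => f [tuple of y :: t]) +
                         gauss_int s (fun t => g [tuple of y :: t])))%E.
  apply: eq_integral => y _.
  rewrite (IH (fun t => f [tuple of y :: t]) (fun t => g [tuple of y :: t]))//;
  exact: measurable_cons_section.
rewrite ge0_integralD//.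
- by move=> y _; exact: gauss_int_ge0.
- exact: measurable_gauss_int_cons.
- by move=> y _; exact: gauss_int_ge0.
- exact: measurable_gauss_int_cons.
Qed.

Lemma ge0_le_gauss_int d (f g : d.-tuple R -> \bar R) :
  measurable_fun [set: d.-tuple R] f -> (forall t, 0 <= f t)%E ->
  measurable_fun [set: d.-tuple R] g -> (forall t, f t <= g t)%E ->
  (gauss_int s f <= gauss_int s g)%E.
Proof.
elim: d f g => [|d IH] f g mf f0 mg fg //=.
have g0 t : (0 <= g t)%E := le_trans (f0 t) (fg t).
apply: ge0_le_integral => //.
- by move=> y _; exact: gauss_int_ge0.
- exact: measurable_gauss_int_cons.
- exact: measurable_gauss_int_cons.
- by move=> y _; apply: IH => //; exact: measurable_cons_section.
Qed.

Lemma gauss_int1 d : gauss_int s (fun _ : d.-tuple R => 1%E) = 1%E.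
Proof.
elim: d => [|d IH] //=; under eq_integral do rewrite IH.
by rewrite integral_cst// mul1e; exact: probability_setT.
Qed.

End gauss_int.

Section cameron_martin.
Context {R : realType} (s : R).
Local Notation N := (normal_prob (0 : R) s).

(* The log-density of N(a, s^2 I) with respect to N(0, s^2 I) at t. *)
Definition gauss_llr d (a t : d.-tuple R) : R :=
  \sum_(i < d) (2 * tnth a i * tnth t i - tnth a i ^+ 2) / (s ^+ 2 *+ 2).

Lemma gauss_llr_cons d (a : d.+1.-tuple R) (y : R) (t : d.-tuple R) :
  gauss_llr a [tuple of y :: t] =
  (2 * thead a * y - thead a ^+ 2) / (s ^+ 2 *+ 2) + gauss_llr [tuple of behead a] t.
Proof.
rewrite /gauss_llr big_ord_recl [in LHS](tuple_eta a) !tnth0; congr (_ + _).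
by apply: eq_bigr => i _; rewrite !tnthS.
Qed.

Lemma gauss_llrZ d (c : R) (a t : d.-tuple R) :
  gauss_llr [tuple c * tnth a i | i < d] t =
  c * gauss_llr a t + (c - c ^+ 2) * (enorm a ^+ 2 / (s ^+ 2 *+ 2)).
Proof.
rewrite enorm_sqr /gauss_llr mulr_suml !mulr_sumr -big_split /=.
by apply: eq_bigr => i _; rewrite tnth_mktuple; ring.
Qed.

Lemma measurable_expR_gauss_llr d (a : d.-tuple R) :
  measurable_fun [set: d.-tuple R] (fun t => (expR (gauss_llr a t))%:E).
Proof.
apply/measurable_EFinP; apply: measurableT_comp => //.
apply: measurable_sum => i; apply: measurable_funM => //.
apply: measurable_funB => //; apply: measurable_funM => //.
exact: measurable_tnth.
Qed.

Lemma gauss_int_shift d (a : d.-tuple R) (f : d.-tuple R -> \bar R) : s != 0 ->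
  measurable_fun [set: d.-tuple R] f -> (forall t, 0 <= f t)%E ->
  gauss_int s (fun t => f (vadd a t)) =
  gauss_int s (fun t => f t * (expR (gauss_llr a t))%:E)%E.
Proof.
move=> s0; elim: d a f => [|d IH] a f mf f0 /=.
  by rewrite (tuple0 (vadd a [tuple])) /gauss_llr big_ord0 expR0 mule1.
set a0 := thead a; set a' := [tuple of behead a].
have rho0 d' (b : d'.-tuple R) t : (0 <= (expR (gauss_llr b t))%:E)%E.
  by rewrite lee_fin expR_ge0.
pose H z := gauss_int s (fun t => f [tuple of z :: t] * (expR (gauss_llr a' t))%:E)%E.
have mH : measurable_fun [set: R] H.
  apply: (measurable_gauss_int s
    (F := fun z t => (f [tuple of z :: t] * (expR (gauss_llr a' t))%:E)%E)).
    apply: emeasurable_funM; first exact: measurable_cons_uncurry.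
    exact: measurableT_comp (measurable_expR_gauss_llr a') measurable_snd.
  by move=> z t; rewrite mule_ge0.
transitivity (\int[N]_y H (y + a0)%R)%E.
  apply: eq_integral => y _.
  rewrite /H -IH//; last exact: measurable_cons_section.
  by congr (gauss_int s _); apply/funext => t; rewrite vadd_cons addrC.
rewrite ge0_integral_normal_prob_shift//; last first.
  by move=> z; apply: gauss_int_ge0 => t; rewrite mule_ge0.
apply: eq_integral => y _.
rewrite /H muleC -ge0_gauss_intZl//; first last.
- by move=> t; rewrite mule_ge0.
- apply: emeasurable_funM; first exact: measurable_cons_section.
  exact: measurable_expR_gauss_llr.
congr (gauss_int s _); apply/funext => t.
by rewrite gauss_llr_cons expRD EFinM muleCA.
Qed.

Lemma gauss_int_expR_llr d (a : d.-tuple R) : s != 0 ->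
  gauss_int s (fun t => (expR (gauss_llr a t))%:E) = 1%E.
Proof.
move=> s0; rewrite -(gauss_int1 s d).
rewrite (@gauss_int_shift d a (fun=> 1%E))//.
by congr (gauss_int s _); apply/funext => t; rewrite mul1e.
Qed.

End cameron_martin.

Section gauss_out.
Context {R : realType}.

Lemma gauss_out_ge0 d (w : d.-tuple R) (s : R) (W : set (d.-tuple R)) :
  (0 <= gauss_out w s W)%E.
Proof.
rewrite /gauss_out; case: ifP => _; first by rewrite lee_fin indicE.
by apply: gauss_int_ge0 => t; rewrite lee_fin indicE.
Qed.

Lemma measurable_indic_vadd d (w : d.-tuple R) (W : set (d.-tuple R)) :
  measurable W -> measurable_fun [set: d.-tuple R] (fun t => (\1_W (vadd w t) : R)%:E).
Proof.
move=> mW; apply/measurable_EFinP; apply: measurableT_comp.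
  exact: measurable_indic.
exact: measurable_vadd.
Qed.

Lemma gauss_out_change_of_mean d (w1 w2 : d.-tuple R) (s : R) (W : set (d.-tuple R)) :
  s != 0 -> measurable W ->
  gauss_out w2 s W = gauss_int s (fun t =>
    (\1_W (vadd w1 t))%:E * (expR (gauss_llr s (vsub w2 w1) t))%:E)%E.
Proof.
move=> s0 mW; rewrite /gauss_out (negbTE s0) -gauss_int_shift//; last first.
  exact: measurable_indic_vadd.
congr (gauss_int s _); apply/funext => t; congr (EFin (\1_W _)).
by apply: eq_from_tnth => i; rewrite !tnth_mktuple; ring.
Qed.

Lemma gauss_out_le_tilt d (w1 w2 : d.-tuple R) (s eps C lam : R)
    (W : set (d.-tuple R)) :
  s != 0 -> measurable W -> 0 <= C ->
  (forall x, 1 - expR x <= C * expR (- lam * x)) ->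
  (gauss_out w1 s W <= (expR eps)%:E * gauss_out w2 s W +
    (C * expR (- lam * eps +
      (lam + lam ^+ 2) * (enorm (vsub w2 w1) ^+ 2 / (s ^+ 2 *+ 2))))%:E)%E.
Proof.
move=> s0 mW C0 tilt.
rewrite (gauss_out_change_of_mean w1 w2) // /gauss_out (negbTE s0).
set a := vsub w2 w1; set mu := enorm a ^+ 2 / _.
set K := expR (- lam * eps + (lam + lam ^+ 2) * mu).
pose g (t : d.-tuple R) : \bar R := (\1_W (vadd w1 t))%:E.
pose rho (c t : d.-tuple R) : \bar R := (expR (gauss_llr s c t))%:E.
pose b := [tuple - lam * tnth a i | i < d].
have g0 t : (0 <= g t)%E by rewrite lee_fin indicE.
have rho0 c t : (0 <= rho c t)%E by rewrite lee_fin expR_ge0.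
have CK0 : 0 <= C * K by rewrite mulr_ge0// expR_ge0.
have mg := measurable_indic_vadd w1 mW.
have mga : measurable_fun [set: d.-tuple R] (fun t => g t * rho a t)%E.
  by apply: emeasurable_funM => //; exact: measurable_expR_gauss_llr.
have mCKb : measurable_fun [set: d.-tuple R] (fun t => (C * K)%:E * rho b t)%E.
  by apply: emeasurable_funM => //; exact: measurable_expR_gauss_llr.
have tail : gauss_int s (fun t => (C * K)%:E * rho b t)%E = (C * K)%:E.
  by rewrite ge0_gauss_intZl ?gauss_int_expR_llr ?mule1//; exact: measurable_expR_gauss_llr.
have pointwise t :
    (g t <= (expR eps)%:E * (g t * rho a t) + (C * K)%:E * rho b t)%E.
  rewrite /g /rho indicE; case: (vadd w1 t \in W) => /=; last first.
    by rewrite mul0e mule0 add0e mule_ge0.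
  rewrite mul1e -!EFinM -EFinD lee_fin gauss_llrZ -/mu.
  have -> : C * K * expR (- lam * gauss_llr s a t + (- lam - (- lam) ^+ 2) * mu) =
      C * expR (- lam * (eps + gauss_llr s a t)).
    by rewrite -mulrA /K -expRD; congr (C * expR _); ring.
  by have := tilt (eps + gauss_llr s a t); rewrite expRD; lra.
rewrite -tail -ge0_gauss_intZl ?expR_ge0// -ge0_gauss_intD//; first last.
- by move=> t; rewrite !mule_ge0// lee_fin expR_ge0.
- exact: emeasurable_funM.
apply: ge0_le_gauss_int => //.
by apply: emeasurable_funD => //; exact: emeasurable_funM.
Qed.

End gauss_out.

Section tilt_parameters.
Context {R : realType}.

Lemma expR_fifth_le : expR (1 / 5 : R) <= 5 / 4.
Proof.
have := expR_ge1Dx (- (1 / 5) : R); rewrite expRN.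
have E0 : 0 < expR (1 / 5 : R) := expR_gt0 _.
set E := expR (1 / 5 : R) in E0 * => h.
have : (1 - 1 / 5) * E <= E^-1 * E by rewrite ler_wpM2r// ltW.
by rewrite mulVf ?gt_eqF//; lra.
Qed.

Lemma expR_four_fifths_le : expR (4 / 5 : R) <= 25 / 8.
Proof.
rewrite (_ : 4 / 5 = 4%:R * (1 / 5)) ?expRM_natl; last by rewrite mulrA mulr1.
have h := expR_fifth_le; have h0 : 0 <= expR (1 / 5 : R) := expR_ge0 _.
have : expR (1 / 5 : R) ^+ 4 <= (5 / 4) ^+ 4 by rewrite lerXn2r// ?nnegrE//; lra.
lra.
Qed.

(* max_v (1 - v^2) v = 2 / (3 sqrt 3) < 2/5, with v = e^(x/2). *)
Lemma one_sub_expR_le_half_tilt (x : R) : 1 - expR x <= 2 / 5 * expR (- (1 / 2) * x).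
Proof.
have v0 : 0 < expR (x / 2) := expR_gt0 _.
have -> : expR x = expR (x / 2) ^+ 2 by rewrite -expRM_natl; congr expR; field.
have -> : expR (- (1 / 2) * x) = (expR (x / 2))^-1 by rewrite -expRN; congr expR; field.
set v := expR (x / 2) in v0 *.
rewrite -(@ler_pM2r _ v)// divfK ?gt_eqF//.
have : 0 <= (v - 4 / 7) ^+ 2 * (v + 8 / 7) by rewrite mulr_ge0 ?sqr_ge0//; lra.
nra.
Qed.

(* From y <= e^(y - 1) at y = - lam x. *)
Lemma one_sub_expR_le_tilt (lam x : R) : 0 < lam ->
  1 - expR x <= expR (-1) / lam * expR (- lam * x).
Proof.
move=> lam0.
have h1 := expR_ge1Dx x.
have h2 := expR_ge1Dx (- lam * x - 1).
rewrite expRD [_ * expR (-1)]mulrC in h2.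
rewrite -(@ler_pM2l _ lam)// mulrA mulrCA divff ?gt_eqF// mulr1.
nra.
Qed.

Lemma tilt_bound_half (eps L mu : R) : 0 < eps < 1 -> 1 / 5 <= L <= 1 / 2 ->
  mu * (4 * L) <= eps ^+ 2 ->
  2 / 5 * expR (- (1 / 2) * eps + (1 / 2 + (1 / 2) ^+ 2) * mu) <= 5 / 4 * expR (- L).
Proof.
move=> /andP[e0 e1] /andP[L5 L2] hmu.
set A := _ + _ * mu.
have hA : A + L <= 4 / 5.
  have : 0 <= eps * (1 - eps) by rewrite mulr_ge0//; lra.
  have : 0 <= (L - 1 / 5) * (1 / 2 - L) by rewrite mulr_ge0//; lra.
  have L0 : 0 < L by lra.
  rewrite /A -(@ler_pM2r _ L)//.
  nra.
have : expR (A + L) <= 25 / 8.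
  by apply: le_trans expR_four_fifths_le; rewrite ler_expR.
have -> : expR A = expR (A + L) * expR (- L) by rewrite -expRD addrK.
have := expR_gt0 (- L); nra.
Qed.

Lemma tilt_bound_large (eps L mu lam : R) : 0 < eps < 1 -> 1 / 2 < L ->
  mu * (4 * L) <= eps ^+ 2 -> lam = 2 * L / eps ->
  expR (-1) / lam * expR (- lam * eps + (lam + lam ^+ 2) * mu) <= 5 / 4 * expR (- L).
Proof.
move=> /andP[e0 e1] L2 hmu lamE.
have L0 : 0 < L by lra.
have lam0 : 0 < lam by rewrite lamE divr_gt0// mulr_gt0.
have hexp : - lam * eps + (lam + lam ^+ 2) * mu <= eps / 2 - L.
  have : (lam + lam ^+ 2) * mu <= (lam + lam ^+ 2) * (eps ^+ 2 / (4 * L)).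
    apply: ler_wpM2l; first by rewrite addr_ge0 ?sqr_ge0 ?ltW.
    by rewrite ler_pdivlMr ?mulr_gt0.
  have -> : (lam + lam ^+ 2) * (eps ^+ 2 / (4 * L)) = eps / 2 + L.
    by rewrite lamE; field; apply/andP; split; rewrite gt_eqF.
  have -> : - lam * eps = - (2 * L) by rewrite lamE; field; rewrite gt_eqF.
  lra.
apply: le_trans (_ : expR (-1) / lam * expR (eps / 2 - L) <= _).
  apply: ler_wpM2l; first by rewrite divr_ge0 ?expR_ge0 ?ltW.
  by rewrite ler_expR.
have -> : expR (-1) / lam * expR (eps / 2 - L) =
    eps / (2 * L) * expR (eps / 2 - 1) * expR (- L).
  rewrite mulrAC -expRD -mulrA -expRD lamE.
  rewrite (_ : -1 + (eps / 2 - L) = eps / 2 - 1 - L); last by ring.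
  by field; apply/andP; split; rewrite gt_eqF.
rewrite ler_pM2r ?expR_gt0//.
have : eps / (2 * L) <= 1 by rewrite ler_pdivrMr ?mulr_gt0//; lra.
have : expR (eps / 2 - 1) <= 1 by rewrite expR_le1; lra.
have : 0 <= eps / (2 * L) by rewrite divr_ge0 ?ltW ?mulr_gt0.
nra.
Qed.

(* The tilt lam = 2 L / eps only pays off for L > 1/2; below, lam = 1/2 is used. *)
Lemma exists_tilt (eps L mu : R) : 0 < eps < 1 -> 1 / 5 <= L ->
  mu * (4 * L) <= eps ^+ 2 ->
  exists C lam, [/\ 0 <= C, forall x, 1 - expR x <= C * expR (- lam * x) &
    C * expR (- lam * eps + (lam + lam ^+ 2) * mu) <= 5 / 4 * expR (- L)].
Proof.
move=> he L5 hmu; have [e0 _] := andP he.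
have [L2|L2] := leP L (1 / 2).
  exists (2 / 5), (1 / 2); split => //; first exact: one_sub_expR_le_half_tilt.
  by apply: tilt_bound_half; rewrite ?L5.
have lam0 : 0 < 2 * L / eps by rewrite divr_gt0// mulr_gt0//; lra.
exists (expR (-1) / (2 * L / eps)), (2 * L / eps); split.
- by rewrite divr_ge0 ?expR_ge0 ?ltW.
- by move=> x; exact: one_sub_expR_le_tilt.
- exact: tilt_bound_large.
Qed.

End tilt_parameters.

Section gaussian_mechanism.
Context {R : realType}.

Lemma indist_refl d (eps delta : R) (P : set (d.-tuple R) -> \bar R) :
  0 <= eps -> 0 <= delta -> (forall W, 0 <= P W)%E -> indist eps delta P P.
Proof.
move=> e0 d0 P0 W _; suff le : (P W <= (expR eps)%:E * P W + delta%:E)%E by split.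
apply: le_trans (leeDl _ _); last by rewrite lee_fin.
by apply: lee_pemull => //; rewrite lee_fin -expR0 ler_expR.
Qed.

Lemma ln_delta_ge (delta : R) : 0 < delta < 1 -> 1 / 5 <= ln (5 / 4 / delta).
Proof.
move=> /andP[d0 d1]; have pos : 0 < 5 / 4 / delta by rewrite divr_gt0.
rewrite -ler_expR lnK ?posrE//; apply: le_trans expR_fifth_le _.
by rewrite ler_pdivlMr//; lra.
Qed.

Lemma gauss_sigma_calibrated d (v1 v2 : d.-tuple R) (Delta eps L s : R) :
  0 < Delta -> 0 < eps -> 0 < L -> s = Delta / eps * Num.sqrt (2 * L) ->
  enorm (vsub v1 v2) <= Delta ->
  enorm (vsub v1 v2) ^+ 2 / (s ^+ 2 *+ 2) * (4 * L) <= eps ^+ 2.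
Proof.
move=> Delta0 e0 L0 sE hv.
apply: le_trans (_ : Delta ^+ 2 / (s ^+ 2 *+ 2) * (4 * L) <= _).
  apply: ler_wpM2r; first by rewrite mulr_ge0// ltW.
  apply: ler_wpM2r; first by rewrite invr_ge0 mulrn_wge0 ?sqr_ge0.
  by have := enorm_ge0 (vsub v1 v2); nra.
rewrite sE exprMn sqr_sqrtr; last by rewrite mulr_ge0// ltW.
rewrite [X in X <= _](_ : _ = eps ^+ 2)//.
by field; rewrite !gt_eqF.
Qed.

Lemma gauss_out_le_calibrated d (w1 w2 : d.-tuple R) (s eps L : R)
    (W : set (d.-tuple R)) :
  s != 0 -> measurable W -> 0 < eps < 1 -> 1 / 5 <= L ->
  enorm (vsub w2 w1) ^+ 2 / (s ^+ 2 *+ 2) * (4 * L) <= eps ^+ 2 ->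
  (gauss_out w1 s W <= (expR eps)%:E * gauss_out w2 s W + (5 / 4 * expR (- L))%:E)%E.
Proof.
move=> s0 mW he hL hmu.
have [C [lam [C0 tilt bound]]] := exists_tilt he hL hmu.
apply: le_trans (gauss_out_le_tilt w1 w2 eps s0 mW C0 tilt) _.
by apply: leeD2l; rewrite lee_fin.
Qed.

Theorem gaussian_mechanism_indist d (w1 w2 : d.-tuple R) (Delta eps delta s : R) :
  enorm (vsub w1 w2) <= Delta -> 0 < eps < 1 -> 0 < delta < 1 ->
  s = Delta / eps * Num.sqrt (2 * ln (5 / 4 / delta)) ->
  indist eps delta (gauss_out w1 s) (gauss_out w2 s).
Proof.
move=> hw he hd sE; have [e0 _] := andP he; have [d0 _] := andP hd.
set L := ln (5 / 4 / delta).
have L5 : 1 / 5 <= L := ln_delta_ge hd.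
have deltaE : delta = 5 / 4 * expR (- L).
  by rewrite expRN lnK ?posrE ?divr_gt0//; field; rewrite gt_eqF.
have [Delta0|Delta0] := eqVneq Delta 0.
  have -> : w1 = w2.
    by rewrite Delta0 in hw; apply: enorm_vsub_eq0; apply/le_anti; rewrite hw enorm_ge0.
  by apply: indist_refl; rewrite ?ltW// => W; exact: gauss_out_ge0.
have DeltaP : 0 < Delta by rewrite lt_neqAle eq_sym Delta0 (le_trans (enorm_ge0 _) hw).
have L0 : 0 < L by lra.
have sP : 0 < s by rewrite sE mulr_gt0 ?divr_gt0// sqrtr_gt0 mulr_gt0.
have calibrated v1 v2 := @gauss_sigma_calibrated d v1 v2 _ _ _ _ DeltaP e0 L0 sE.
move=> W mW; rewrite deltaE; split; apply: gauss_out_le_calibrated; rewrite ?gt_eqF//.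
- by apply: calibrated; rewrite enorm_vsubC.
- exact: calibrated.
Qed.

End gaussian_mechanism.

Lemma enorm_le_RS {R : realType} (Z : choiceType) d (A : {fset Z} -> d.-tuple R)
    (S : {fset Z}) (z : Z) :
  RS_bounded A -> enorm (vsub (A (S `|` [fset z])%fset) (A S)) <= RS A S.
Proof. by move=> bA; apply: (ub_le_sup (bA S)); exists z. Qed.

Lemma fsetUD_disjoint (K : choiceType) (A B : {fset K}) :
  [disjoint A & B]%fset -> ((A `|` B) `\` B)%fset = A.
Proof. by move=> AB; rewrite fsetDUl fsetDv fsetU0; apply/fsetDidPl. Qed.

Lemma fset_card_le1 (K : choiceType) (U : {fset K}) :
  (#|` U| <= 1)%N -> U = fset0 \/ exists z, U = [fset z]%fset.
Proof.
case: (posnP #|` U|) => [/cardfs0_eq|U0 U1]; [by left|right].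
by apply/cardfs1P; rewrite eqn_leq U0 U1.
Qed.

Theorem mainTheorem3 (R : realType) (Z : choiceType) (d n : nat)
  (A : {fset Z} -> d.-tuple R) (eps delta : R) :
  RS_bounded A ->
  0 < eps < 1 -> 0 < delta < 1 ->
  unlearning n A (passive_gauss A eps delta) eps delta.
Proof.
move=> bA he hd Rs U RsE RsU_card RsU.
rewrite /passive_gauss fsetD0 fsetUD_disjoint//.
have U_le1 : (#|` U| <= 1)%N.
  have := cardfsUI U Rs; rewrite fsetIC (disjoint_fsetI0 RsU) cardfs0 addn0 RsE.
  by move: RsU_card => /[swap] ->; rewrite addnC -addn1 leq_add2l.
have [->|[z ->]] := fset_card_le1 U_le1.
  have [e0 _] := andP he; have [d0 _] := andP hd.
  by rewrite fsetU0; apply: indist_refl; rewrite ?ltW// => W; exact: gauss_out_ge0.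
exact: gaussian_mechanism_indist (enorm_le_RS Rs z bA) he hd erefl.
Qed.
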